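(* If $s_1,s_2\in\mathcal F(M,g^M,E,h^E)$ and $t_1,t_2>0$ are real numbers, then $t_1s_1+t_2s_2\in\mathcal F(M,g^M,E,h^E)$. In particular $\mathcal F(M,g^M,E,h^E)$ is a convex cone.
   Context: $G$ is a compact Lie group with Lie algebra $\mathfrak g$; a $G$-invariant inner product on $\mathfrak g^*$ is fixed, inducing an isomorphism $\psi:\mathfrak g^*\to\mathfrak g$ and norms $|\cdot|$. For $u\in\mathfrak g$ let $u_M(x)=\frac{d}{dt}|_{t=0}\exp(tu)\cdot x$. $(M,g^M)$ is a complete complex manifold without boundary of complex dimension $n$, with complex structure $J$ orthogonal for $g^M$, on which $G$ acts holomorphically and isometrically. It is a tamed asymptotically Kähler $G$-manifold: there is a $G$-invariant compact $K\subset M$ such that $g^M$ is Kähler on $M\setminus K$ with Kähler form $\omega$, the action on $M\setminus K$ is Hamiltonian with moment map $\mu:M\setminus K\to\mathfrak g^*$ (i.e. $d\langle\mu,u\rangle=\iota_{u_M}\omega$), $\mu$ is proper, and the vector field $-J\nabla(|\mu|^2/2)$ vanishes nowhere outside some compact set. Fix a smooth $G$-equivariant extension $\tilde\mu:M\to\mathfrak g^*$ of $\mu$ and set $\mathbf v(x)=\psi(\tilde\mu(x))$, $v=-J\nabla(|\tilde\mu|^2/2)$. $E$ is a $G$-equivariant holomorphic vector bundle over $M$ with a $G$-invariant Hermitian metric $h^E$ and $G$-invariant holomorphic Hermitian connection $\nabla^E$. Let $\mathcal E=E\otimes\Lambda^\bullet(T^{0,1}M)^*$ with connection $\nabla^{\mathcal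 E}=\nabla^E\otimes1+1\otimes\nabla^{LC}$. For $u\in\mathfrak g$ let $\mu^{\mathcal E}(u)=\nabla^{\mathcal E}_{u_M}-\mathcal L^{\mathcal E}_u\in\mathrm{End}(\mathcal E)$, $\mathcal L^{\mathcal E}_u$ the infinitesimal action. Set $\nu=|\mathbf v|+\|\nabla^{LC}v\|+\|\mu^{\mathcal E}(\mathbf v)\|+|v|+1$. A smooth $s:[0,\infty)\to[0,\infty)$ is admissible for $(M,g^M,E,h^E)$ if $s'>0$ and $f(x):=s'(|\tilde\mu(x)|^2/2)$ satisfies $\lim_{x\to\infty}\frac{f^2|v|^2}{|df|\,|v|+f\nu+1}=\infty$ ($x$ leaving every compact set). $\mathcal F(M,g^M,E,h^E)$ is the set of admissible functions. *)

From HB Require Import structures.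
From mathcomp Require Import all_boot all_order all_algebra.
From mathcomp Require Import all_classical all_reals all_analysis.
Set Implicit Arguments. Unset Strict Implicit. Unset Printing Implicit Defensive.
Import Order.TTheory GRing.Theory Num.Theory.
Import numFieldNormedType.Exports.
Local Open Scope classical_set_scope.
Local Open Scope ring_scope.

(* s : R -> R is smooth: all iterated derivatives exist everywhere.
   (A smooth function on [0,oo) extends to a smooth function on R; only the
   values on [0,oo) are ever used below.) *)
Definition smooth_fun (R : realType) (s : R -> R) : Prop :=
  forall (n : nat) (x : R), derivable (derive1n n s) x 1.

Definition tends_to_pinfty_at_infinity (R : realType) (M : topologicalType)
  (g : M -> R) : Prop :=
  forall A : R, exists K : set M, compact K /\ (forall x, ~ K x -> A < g x).

(* Abstract geometric data on M:
   mu2  x = |mu~(x)|^2 / 2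
   dmu2 x = |d(|mu~|^2/2)|(x)   (pointwise norm of the differential)
   nv   x = |v(x)|
   nu   x = nu(x) = |v_bold| + ||nabla v|| + ||mu^E(v_bold)|| + |v| + 1.
   For f := s'(mu2), df = s''(mu2) d(mu2), hence |df| = |s''(mu2)| * dmu2. *)
Definition admissible (R : realType) (M : topologicalType)
  (mu2 dmu2 nv nu : M -> R) (s : R -> R) : Prop :=
  [/\ smooth_fun s,
      (forall r : R, 0 <= r -> 0 < derive1 s r) &
      tends_to_pinfty_at_infinity
        (fun x : M =>
           let f := derive1 s (mu2 x) in
           let df := `|derive1n 2 s (mu2 x)| * dmu2 x in
           (f ^+ 2 * nv x ^+ 2) / (df * nv x + f * nu x + 1))].

(* Smoothness and positivity of s' survive positive linear combinations because
   differentiation is linear.  For the growth condition put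
   q(f, g) := f^2 w^2 / (g w + f n + 1), so that the quotient in the definition
   of admissibility is q(s'(mu2), |s''(mu2)| dmu2).  Replacing (f, g) by
   (t f, t g) multiplies q by at least min(t, t^2); and since the numerator of q
   is superadditive in f while its denominator is additive in (f, g), we get
   q(f1 + f2, g) >= min(q(f1, g1), q(f2, g2)) whenever g <= g1 + g2.  With the
   triangle inequality for s'', the quotient of t1 s1 + t2 s2 thus dominates a
   fixed positive multiple of the minimum of the quotients of s1 and s2, which
   tends to +oo at infinity. *)
From HB Require Import structures.
From mathcomp Require Import all_boot all_order all_algebra.
From mathcomp Require Import all_classical all_reals all_analysis.
From mathcomp Require Import lra ring.
Set Implicit Arguments. Unset Strict Implicit. Unset Printing Implicit Defensive.
Import Order.TTheory GRing.Theory Num.Theory.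
Import numFieldNormedType.Exports.
Local Open Scope ring_scope.

Lemma is_derive_lincomb (R : realType) (g1 g2 : R -> R) (t1 t2 x : R) :
  derivable g1 x 1 -> derivable g2 x 1 ->
  is_derive x 1 (fun r => t1 * g1 r + t2 * g2 r)
    (t1 * derive1 g1 x + t2 * derive1 g2 x).
Proof. by move=> /derivableP ? /derivableP ?; rewrite !derive1E; apply: is_deriveD. Qed.

Lemma derive1n_lincomb (R : realType) (s1 s2 : R -> R) (t1 t2 : R) (n : nat) :
  smooth_fun s1 -> smooth_fun s2 ->
  derive1n n (fun r => t1 * s1 r + t2 * s2 r) =
  (fun r => t1 * derive1n n s1 r + t2 * derive1n n s2 r).
Proof.
move=> sm1 sm2; elim: n => [//|n IH].
rewrite /derive1n !iterS -/(derive1n n _) -/(derive1n n s1) -/(derive1n n s2) IH.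
apply/funext => x; rewrite derive1E.
by have D := is_derive_lincomb t1 t2 (sm1 n x) (sm2 n x); rewrite derive_val.
Qed.

Lemma smooth_fun_lincomb (R : realType) (s1 s2 : R -> R) (t1 t2 : R) :
  smooth_fun s1 -> smooth_fun s2 ->
  smooth_fun (fun r => t1 * s1 r + t2 * s2 r).
Proof.
move=> sm1 sm2 n x; rewrite derive1n_lincomb //.
by have D := is_derive_lincomb t1 t2 (sm1 n x) (sm2 n x); apply: ex_derive.
Qed.

Definition growth_ratio (R : numFieldType) (w n f g : R) : R :=
  f ^+ 2 * w ^+ 2 / (g * w + f * n + 1).

Section GrowthRatio.
Variables (R : realFieldType) (w n : R).
Hypotheses (w_ge0 : 0 <= w) (n_ge0 : 0 <= n).

Lemma growth_denom_gt0 (f g : R) : 0 <= f -> 0 <= g -> 0 < g * w + f * n + 1.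
Proof. by move=> f0 g0; have := mulr_ge0 g0 w_ge0; have := mulr_ge0 f0 n_ge0; lra. Qed.

Lemma growth_ratio_ge0 (f g : R) : 0 <= f -> 0 <= g -> 0 <= growth_ratio w n f g.
Proof.
move=> f0 g0; apply: divr_ge0; first by rewrite mulr_ge0 ?sqr_ge0.
exact/ltW/growth_denom_gt0.
Qed.

Lemma growth_ratio_scale (t f g : R) : 0 < t -> 0 <= f -> 0 <= g ->
  Num.min t (t ^+ 2) * growth_ratio w n f g <= growth_ratio w n (t * f) (t * g).
Proof.
move=> t0 f0 g0; set c := Num.min t (t ^+ 2); set X := g * w + f * n.
have X0 : 0 <= X by rewrite addr_ge0 ?mulr_ge0.
have ct : c * t <= t ^+ 2 by rewrite expr2 ler_wpM2r ?ge_min ?lexx // ltW.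
have ct2 : c <= t ^+ 2 by rewrite ge_min lexx orbT.
have denom_scale : c * (t * X + 1) <= t ^+ 2 * (X + 1).
  by have := ler_wpM2r X0 ct; rewrite !mulrDr mulr1 mulrA; lra.
rewrite /growth_ratio -/X.
rewrite (_ : t * g * w + t * f * n + 1 = t * X + 1); last by rewrite /X; ring.
rewrite (_ : (t * f) ^+ 2 * w ^+ 2 = t ^+ 2 * (f ^+ 2 * w ^+ 2)); last by ring.
set u := _ / (X + 1).
have u0 : 0 <= u by apply: growth_ratio_ge0.
have Nu : f ^+ 2 * w ^+ 2 = u * (X + 1) by rewrite /u divfK // gt_eqF ?ltr_pwDr.
rewrite ler_pdivlMr; last by have := mulr_ge0 (ltW t0) X0; lra.
by rewrite Nu; have := ler_wpM2l u0 denom_scale; nra.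
Qed.

Lemma growth_ratio_add (a b g1 g2 g : R) :
  0 <= a -> 0 <= b -> 0 <= g1 -> 0 <= g2 -> 0 <= g -> g <= g1 + g2 ->
  Num.min (growth_ratio w n a g1) (growth_ratio w n b g2)
    <= growth_ratio w n (a + b) g.
Proof.
move=> a0 b0 g10 g20 g0 gg; set m := Num.min _ _.
have D1 := growth_denom_gt0 a0 g10; have D2 := growth_denom_gt0 b0 g20.
have mD1 : m * (g1 * w + a * n + 1) <= a ^+ 2 * w ^+ 2.
  by rewrite -ler_pdivlMr // ge_min lexx.
have mD2 : m * (g2 * w + b * n + 1) <= b ^+ 2 * w ^+ 2.
  by rewrite -ler_pdivlMr // ge_min lexx orbT.
have m0 : 0 <= m by rewrite le_min !growth_ratio_ge0.
have gw : g * w <= g1 * w + g2 * w by rewrite -mulrDl ler_wpM2r.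
have num_super : a ^+ 2 * w ^+ 2 + b ^+ 2 * w ^+ 2 <= (a + b) ^+ 2 * w ^+ 2.
  rewrite -mulrDl ler_wpM2r ?sqr_ge0 // sqrrD; have := mulr_ge0 a0 b0; lra.
have denom_sub : g * w + (a + b) * n + 1
    <= (g1 * w + a * n + 1) + (g2 * w + b * n + 1) by rewrite mulrDl; lra.
rewrite ler_pdivlMr ?growth_denom_gt0 ?addr_ge0 //.
by have := ler_wpM2l m0 denom_sub; lra.
Qed.

Lemma growth_ratio_lincomb (t1 t2 f1 f2 h1 h2 d : R) :
  0 < t1 -> 0 < t2 -> 0 <= f1 -> 0 <= f2 -> 0 <= d ->
  Num.min (Num.min t1 (t1 ^+ 2)) (Num.min t2 (t2 ^+ 2)) *
    Num.min (growth_ratio w n f1 (`|h1| * d)) (growth_ratio w n f2 (`|h2| * d))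
  <= growth_ratio w n (t1 * f1 + t2 * f2) (`|t1 * h1 + t2 * h2| * d).
Proof.
move=> t10 t20 f10 f20 d0; set c := Num.min _ _.
have g10 : 0 <= `|h1| * d by rewrite mulr_ge0.
have g20 : 0 <= `|h2| * d by rewrite mulr_ge0.
have c0 : 0 <= c by rewrite !le_min !ltW ?exprn_gt0.
have q10 := growth_ratio_ge0 f10 g10; have q20 := growth_ratio_ge0 f20 g20.
have tf10 : 0 <= t1 * f1 by rewrite mulr_ge0 // ltW.
have tf20 : 0 <= t2 * f2 by rewrite mulr_ge0 // ltW.
have tg10 : 0 <= t1 * (`|h1| * d) by rewrite mulr_ge0 // ltW.
have tg20 : 0 <= t2 * (`|h2| * d) by rewrite mulr_ge0 // ltW.
have g0 : 0 <= `|t1 * h1 + t2 * h2| * d by rewrite mulr_ge0.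
have g_sub : `|t1 * h1 + t2 * h2| * d <= t1 * (`|h1| * d) + t2 * (`|h2| * d).
  rewrite !mulrA -mulrDl ler_wpM2r // (le_trans (ler_normD _ _)) //.
  by rewrite !normrM (gtr0_norm t10) (gtr0_norm t20).
apply: le_trans (growth_ratio_add tf10 tf20 tg10 tg20 g0 g_sub).
have qmin0 : 0 <= Num.min (growth_ratio w n f1 (`|h1| * d))
                          (growth_ratio w n f2 (`|h2| * d)) by rewrite le_min q10 q20.
rewrite le_min; apply/andP; split.
- apply: le_trans (growth_ratio_scale t10 f10 g10).
  by apply: ler_pM => //; rewrite ge_min lexx.
- apply: le_trans (growth_ratio_scale t20 f20 g20).
  by apply: ler_pM => //; rewrite ge_min lexx orbT.
Qed.

End GrowthRatio.

Section TendsToPinfty.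
Variables (R : realType) (M : topologicalType).

Lemma tends_to_pinfty_min (g1 g2 : M -> R) :
  tends_to_pinfty_at_infinity g1 -> tends_to_pinfty_at_infinity g2 ->
  tends_to_pinfty_at_infinity (fun x => Num.min (g1 x) (g2 x)).
Proof.
move=> T1 T2 A; have [K1 [cK1 HK1]] := T1 A; have [K2 [cK2 HK2]] := T2 A.
exists (K1 `|` K2)%classic; split; first exact: compactU.
by move=> x Kx; rewrite lt_min HK1 ?HK2 // => K; apply: Kx; [right|left].
Qed.

Lemma tends_to_pinfty_scale (c : R) (g : M -> R) : 0 < c ->
  tends_to_pinfty_at_infinity g -> tends_to_pinfty_at_infinity (fun x => c * g x).
Proof.
move=> c0 T A; have [K [cK HK]] := T (A / c).
by exists K; split=> // x Kx; rewrite mulrC -ltr_pdivrMr // HK.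
Qed.

Lemma tends_to_pinfty_le (g h : M -> R) : (forall x, g x <= h x) ->
  tends_to_pinfty_at_infinity g -> tends_to_pinfty_at_infinity h.
Proof.
move=> gh T A; have [K [cK HK]] := T A.
by exists K; split=> // x Kx; apply: lt_le_trans (gh x); apply: HK.
Qed.

End TendsToPinfty.

Theorem mainTheorem2 (R : realType) (M : topologicalType)
  (mu2 dmu2 nv nu : M -> R)
  (Hmu2 : forall x, 0 <= mu2 x)
  (Hdmu2 : forall x, 0 <= dmu2 x)
  (Hnv : forall x, 0 <= nv x)
  (Hnu : forall x, 1 <= nu x)
  (s1 s2 : R -> R) (t1 t2 : R) :
  0 < t1 -> 0 < t2 ->
  admissible mu2 dmu2 nv nu s1 -> admissible mu2 dmu2 nv nu s2 ->
  admissible mu2 dmu2 nv nu (fun r => t1 * s1 r + t2 * s2 r).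
Proof.
move=> t10 t20 [sm1 pos1 T1] [sm2 pos2 T2].
have D n := derive1n_lincomb t1 t2 n sm1 sm2.
have D1 : derive1 (fun r => t1 * s1 r + t2 * s2 r) =
  (fun r => t1 * derive1 s1 r + t2 * derive1 s2 r) := D 1%N.
split; first exact: smooth_fun_lincomb.
  by move=> r r0; rewrite D1 addr_gt0 // mulr_gt0 // ?pos1 ?pos2.
set c := Num.min (Num.min t1 (t1 ^+ 2)) (Num.min t2 (t2 ^+ 2)).
have c0 : 0 < c by rewrite !lt_min t10 t20 !exprn_gt0.
apply: tends_to_pinfty_le (tends_to_pinfty_scale c0 (tends_to_pinfty_min T1 T2)).
have D2 : derive1 (derive1 (fun r => t1 * s1 r + t2 * s2 r)) =
  (fun r => t1 * derive1 (derive1 s1) r + t2 * derive1 (derive1 s2) r) := D 2%N.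
move=> x /=; rewrite D2 D1.
have n0 : 0 <= nu x by apply: le_trans (Hnu x).
exact: growth_ratio_lincomb (Hnv x) n0 _ _ _ _ _ _ _ t10 t20
  (ltW (pos1 _ (Hmu2 x))) (ltW (pos2 _ (Hmu2 x))) (Hdmu2 x).
Qed.
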